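(* Let $q$ be a prime power, $s\ge 2$, $d\ge 0$ integers, and let $P\in\mathbb{F}_q[x_1,\dots,x_s]$ be a homogeneous polynomial with $\deg(P)=d$. Then there exist $\lfloor q/(d+1)\rfloor^{s-1}$ subsets of $\mathbb{F}_q^s$, each of size $(d+1)^{s-1}$, each of which is an interpolation set of $P$, and which are pairwise disjoint under multiplication.
   Context: A polynomial is homogeneous if all its monomials have the same total degree. A set $R\subseteq\mathbb{F}_q^s$ is an interpolation set of the homogeneous polynomial $P$ of degree $d$ if for every homogeneous polynomial $Q$ of degree $d$ with $P(\boldsymbol{x})=Q(\boldsymbol{x})$ for all $\boldsymbol{x}\in R$, one has $P(\boldsymbol{x})=Q(\boldsymbol{x})$ for all $\boldsymbol{x}\in\mathbb{F}_q^s$. Two sets $S_1,S_2\subseteq\mathbb{F}_q^s$ are disjoint under multiplication if for every $\boldsymbol{x}\in S_1$ and every $\alpha\in\mathbb{F}_q\setminus\{0\}$, $\alpha\boldsymbol{x}\notin S_2$. *)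

From mathcomp Require Import all_boot all_order all_algebra.
From mathcomp Require Import mpoly.
Set Implicit Arguments. Unset Strict Implicit. Unset Printing Implicit Defensive.
Import GRing.Theory.
Local Open Scope ring_scope.

Notation point F s := {ffun 'I_s -> F}.

Definition interpolation_set (F : finFieldType) (s d : nat)
    (P : {mpoly F[s]}) (R : {set point F s}) : Prop :=
  forall Q : {mpoly F[s]}, Q \is d.-homog ->
    (forall x, x \in R -> P.@[x] = Q.@[x]) ->
    forall x : point F s, P.@[x] = Q.@[x].

Definition pscale (F : fieldType) (s : nat) (a : F) (x : point F s)
  : point F s := [ffun i => a * x i].

Definition disjoint_under_mul (F : finFieldType) (s : nat)
    (S1 S2 : {set point F s}) : Prop :=
  forall x, x \in S1 -> forall a : F, a != 0 -> pscale a x \notin S2.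

From mathcomp Require Import all_boot all_order all_algebra.
From mathcomp Require Import mpoly.
Set Implicit Arguments. Unset Strict Implicit. Unset Printing Implicit Defensive.
Import GRing.Theory.
Local Open Scope ring_scope.

(* Split F into floor(q/(d+1)) disjoint blocks of d+1 elements.  Every choice
   of blocks B_1, ..., B_(s-1) gives the grid B_1 x ... x B_(s-1) x {1}.  Two
   different choices differ in some coordinate, and all points have last
   coordinate 1, so no nonzero multiple of a point of one grid lies in the
   other.  A homogeneous H of degree d is determined by its dehomogenization
   H(x_1, ..., x_(s-1), 1), whose degree in each variable is at most d; such a
   polynomial vanishing on a product of sets of size d+1 is zero (induction on
   the number of variables: a univariate polynomial of degree at most d with
   d+1 roots is zero).  Applied to H = P - Q, each grid is an interpolation
   set. *)

Local Notation widen := (widen_ord (leqnSn _)).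

Lemma exists_injective_leq_card (A B : finType) :
  (#|A| <= #|B|)%N -> exists f : A -> B, injective f.
Proof.
move=> le_AB; exists (fun x => enum_val (widen_ord le_AB (enum_rank x))).
by move=> x y /enum_val_inj [] /val_inj /enum_rank_inj.
Qed.

Lemma widen_lift n (i : 'I_n) : widen i = lift ord_max i.
Proof. by apply/val_inj; rewrite /= /bump leqNgt ltn_ord. Qed.

Definition vrcons (T : Type) n (v : 'I_n -> T) (t : T) (i : 'I_n.+1) : T :=
  if unlift ord_max i is Some k then v k else t.

Lemma vrcons_widen T n (v : 'I_n -> T) t i : vrcons v t (widen i) = v i.
Proof. by rewrite /vrcons widen_lift liftK. Qed.

Lemma vrcons_last T n (v : 'I_n -> T) t : vrcons v t ord_max = t.
Proof. by rewrite /vrcons unlift_none. Qed.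

Lemma vrcons_map T U n (f : 'I_n.+1 -> T -> U) (v : 'I_n -> T) t i :
  f i (vrcons v t i) = vrcons (fun k => f (widen k) (v k)) (f ord_max t) i.
Proof.
by rewrite /vrcons; case: unliftP => [k ->|->]; rewrite ?liftK ?widen_lift.
Qed.

Definition mnmtrunc n (m : 'X_{1..n.+1}) : 'X_{1..n} :=
  [multinom m (widen i) | i < n].

Definition mnmrcons n (M : 'X_{1..n}) (j : nat) : 'X_{1..n.+1} :=
  [multinom vrcons M j i | i < n.+1].

Lemma mnmtrunc_rcons n (M : 'X_{1..n}) j : mnmtrunc (mnmrcons M j) = M.
Proof. by apply/mnmP => i; rewrite !mnmE vrcons_widen. Qed.

Lemma mnmrcons_last n (M : 'X_{1..n}) j : mnmrcons M j ord_max = j.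
Proof. by rewrite mnmE vrcons_last. Qed.

Lemma mnmtruncK n (m : 'X_{1..n.+1}) : mnmrcons (mnmtrunc m) (m ord_max) = m.
Proof.
apply/mnmP => i; rewrite mnmE /vrcons.
by case: unliftP => [k ->|->] //; rewrite mnmE widen_lift.
Qed.

Lemma eq_mnmrcons n (m : 'X_{1..n.+1}) M j :
  (m == mnmrcons M j) = (m ord_max == j) && (mnmtrunc m == M).
Proof.
apply/eqP/andP => [->|[/eqP <- /eqP <-]]; last by rewrite mnmtruncK.
by rewrite mnmtrunc_rcons mnmrcons_last.
Qed.

Lemma mdeg_mnmtrunc n (m : 'X_{1..n.+1}) :
  mdeg m = (mdeg (mnmtrunc m) + m ord_max)%N.
Proof.
rewrite !mdegE big_ord_recr /=; congr (_ + _)%N.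
by apply: eq_bigr => i _; rewrite mnmE.
Qed.

Lemma mnmtrunc_inj_mdeg n (m m' : 'X_{1..n.+1}) :
  mdeg m = mdeg m' -> mnmtrunc m = mnmtrunc m' -> m = m'.
Proof.
rewrite !mdeg_mnmtrunc => + eq_trunc; rewrite eq_trunc => /addnI eq_last.
by rewrite -(mnmtruncK m) -(mnmtruncK m') eq_trunc eq_last.
Qed.

Lemma mnm_leq_mdeg n (m : 'X_{1..n}) i : (m i <= mdeg m)%N.
Proof. by rewrite mdegE (bigD1 i) //= leq_addr. Qed.

Lemma mcoeff_sumE (R : ringType) n (p : {mpoly R[n]}) M :
  p@_M = \sum_(m <- msupp p) p@_m * (m == M)%:R.
Proof.
rewrite {1}(mpolyE p) raddf_sum /=; apply: eq_bigr => m _.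
by rewrite mcoeffZ mcoeffX.
Qed.

Lemma mpoly_eq0_on_msupp (R : ringType) n (p : {mpoly R[n]}) :
  {in msupp p, forall m, p@_m = 0} -> p = 0.
Proof.
move=> p_supp0; apply/mpolyP => m; rewrite mcoeff0.
have [/p_supp0 //|] := boolP (m \in msupp p).
by rewrite mcoeff_msupp negbK => /eqP.
Qed.

Lemma meval_finfun (R : comRingType) n (v : 'I_n -> R) (p : {mpoly R[n]}) :
  p.@[finfun v] = p.@[v].
Proof. by apply: meval_eq => i; rewrite ffunE. Qed.

Section LastVariable.
Variables (R : comRingType) (n : nat).
Implicit Types (p : {mpoly R[n.+1]}) (v : 'I_n -> R).

Definition mtrunc (P : pred 'X_{1..n.+1}) p : {mpoly R[n]} :=
  \sum_(m <- msupp p | P m) p@_m *: 'X_[mnmtrunc m].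

Definition mslice p j := mtrunc (fun m => m ord_max == j) p.

Definition mdehomog p := mtrunc xpredT p.

Lemma mcoeff_mtrunc P p M :
  (mtrunc P p)@_M = \sum_(m <- msupp p | P m) p@_m * (mnmtrunc m == M)%:R.
Proof.
by rewrite raddf_sum /=; apply: eq_bigr => m _; rewrite mcoeffZ mcoeffX.
Qed.

Lemma meval_mtrunc P p v : (mtrunc P p).@[v] =
  \sum_(m <- msupp p | P m) p@_m * \prod_(i < n) v i ^+ m (widen i).
Proof.
rewrite raddf_sum /=; apply: eq_bigr => m _; rewrite mevalZ mevalX.
by congr (_ * _); apply: eq_bigr => i _; rewrite mnmE.
Qed.

Lemma meval_vrcons p v t : p.@[vrcons v t] = \sum_(m <- msupp p)
  p@_m * (\prod_(i < n) v i ^+ m (widen i) * t ^+ m ord_max).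
Proof.
rewrite mevalE; apply: eq_bigr => m _; rewrite big_ord_recr /= vrcons_last.
by congr (_ * (_ * _)); apply: eq_bigr => i _; rewrite vrcons_widen.
Qed.

Lemma mcoeff_mslice p j M : (mslice p j)@_M = p@_(mnmrcons M j).
Proof.
rewrite mcoeff_mtrunc big_mkcond [RHS]mcoeff_sumE; apply: eq_bigr => m _.
by rewrite eq_mnmrcons; case: (m ord_max == j); rewrite ?mulr0.
Qed.

Lemma meval_vrcons_mslice d p v t :
  {in msupp p, forall m : 'X_{1..n.+1}, (m ord_max <= d)%N} ->
  p.@[vrcons v t] = \sum_(j < d.+1) (mslice p j).@[v] * t ^+ j.
Proof.
move=> p_deg; rewrite meval_vrcons; symmetry.
under eq_bigr do rewrite meval_mtrunc big_mkcond /= mulr_suml.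
rewrite exchange_big /= !big_seq; apply: eq_bigr => m /p_deg le_md.
rewrite (bigD1 (Ordinal (le_md : (m ord_max < d.+1)%N))) //= eqxx.
rewrite [X in _ + X]big1 ?addr0 ?mulrA // => j ne_jm.
suff -> : (m ord_max == j) = false by rewrite mul0r.
by apply: contraNF ne_jm => /eqP eq_mj; apply/eqP/val_inj.
Qed.

Lemma meval_mdehomog p v : (mdehomog p).@[v] = p.@[vrcons v 1].
Proof.
rewrite meval_mtrunc meval_vrcons.
by apply: eq_bigr => m _; rewrite expr1n mulr1.
Qed.

Lemma mcoeff_mdehomog d p m : p \is d.-homog -> m \in msupp p ->
  (mdehomog p)@_(mnmtrunc m) = p@_m.
Proof.
move=> /dhomogP p_homog p_m; rewrite mcoeff_mtrunc [RHS]mcoeff_sumE.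
rewrite !big_seq; apply: eq_bigr => m' p_m'.
congr (_ * (_ : bool)%:R); apply/idP/idP => [/eqP|/eqP -> //].
by move=> /(mnmtrunc_inj_mdeg _) -> //; rewrite !p_homog.
Qed.

Lemma mdehomog_deg_le d p : p \is d.-homog ->
  {in msupp (mdehomog p), forall (M : 'X_{1..n}) i, (M i <= d)%N}.
Proof.
move=> /dhomogP p_homog M; rewrite mcoeff_msupp mcoeff_mtrunc => nz_M i.
have [m p_m /eqP <-] : exists2 m, m \in msupp p & mnmtrunc m == M.
  apply/hasP; apply: contraNT nz_M => /hasPn M_out.
  by rewrite big1_seq // => m /andP[_ /M_out /negbTE ->]; rewrite mulr0.
by rewrite mnmE -(p_homog m p_m) mnm_leq_mdeg.
Qed.

End LastVariable.

Section Grids.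
Variable F : idomainType.

Lemma coefs_eq0_of_roots d (c : nat -> F) (t : 'I_d.+1 -> F) :
  injective t -> (forall r, \sum_(j < d.+1) c j * t r ^+ j = 0) ->
  forall j, (j <= d)%N -> c j = 0.
Proof.
move=> t_inj t_roots j le_jd.
have -> : c j = (\poly_(i < d.+1) c i)`_j by rewrite coef_poly ltnS le_jd.
suff -> : \poly_(i < d.+1) c i = 0 by rewrite coef0.
apply: (@roots_geq_poly_eq0 _ _ [seq t r | r <- enum 'I_d.+1]).
- by apply/allP => x /mapP[r _ ->]; apply/rootP; rewrite horner_poly t_roots.
- by rewrite map_inj_uniq ?enum_uniq.
- by rewrite size_map size_enum_ord size_poly.
Qed.

Lemma mpoly_grid_eq0 n d (a : 'I_n -> 'I_d.+1 -> F) (p : {mpoly F[n]}) :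
  (forall i, injective (a i)) ->
  {in msupp p, forall (m : 'X_{1..n}) i, (m i <= d)%N} ->
  (forall g : {ffun 'I_n -> 'I_d.+1}, p.@[fun i => a i (g i)] = 0) -> p = 0.
Proof.
elim: n a p => [|n IH] a p a_inj p_deg p_grid.
  have p_const : (msize p <= 1)%N.
    by rewrite msizeE; apply/bigmax_leqP_seq => m _ _; rewrite mdegE big_ord0.
  have := p_grid [ffun=> ord0]; rewrite (msize1_polyC p_const) mevalC => ->.
  exact: mpolyC0.
have slice_eq0 j : (j <= d)%N -> mslice p j = 0.
  move=> le_jd; apply: (IH (fun i => a (widen i))) => [i|M|g].
  - exact: a_inj.
  - rewrite mcoeff_msupp mcoeff_mslice -mcoeff_msupp => /p_deg M_deg i.
    by have := M_deg (widen i); rewrite mnmE vrcons_widen.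
  pose c j := (mslice p j).@[fun i => a (widen i) (g i)].
  apply: (@coefs_eq0_of_roots d c _ (a_inj ord_max)) le_jd => r.
  rewrite -(meval_vrcons_mslice _ _ (fun m p_m => p_deg m p_m ord_max)).
  rewrite -(p_grid (finfun (vrcons g r))).
  by apply: meval_eq => i; rewrite ffunE (vrcons_map a).
apply: mpoly_eq0_on_msupp => m p_m.
by rewrite -[m]mnmtruncK -mcoeff_mslice slice_eq0 ?mcoeff0 ?p_deg.
Qed.

Lemma dhomog_grid_eq0 n d (a : 'I_n -> 'I_d.+1 -> F) (p : {mpoly F[n.+1]}) :
  (forall i, injective (a i)) -> p \is d.-homog ->
  (forall g : {ffun 'I_n -> 'I_d.+1}, p.@[vrcons (fun i => a i (g i)) 1] = 0) ->
  p = 0.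
Proof.
move=> a_inj p_homog p_grid.
have dehomog_eq0 : mdehomog p = 0.
  apply: (mpoly_grid_eq0 a_inj (mdehomog_deg_le p_homog)) => g.
  by rewrite meval_mdehomog p_grid.
apply: mpoly_eq0_on_msupp => m p_m.
by rewrite -(mcoeff_mdehomog p_homog p_m) dehomog_eq0 mcoeff0.
Qed.

End Grids.

Section ChartGrids.
Variables (F : finFieldType) (n d : nat).
Implicit Types (a b : 'I_n -> 'I_d.+1 -> F).

Definition chart_grid a : {set point F n.+1} :=
  [set finfun (vrcons (fun j => a j (g j)) 1) | g : {ffun 'I_n -> 'I_d.+1}].

Lemma card_chart_grid a :
  (forall j, injective (a j)) -> #|chart_grid a| = (d.+1 ^ n)%N.
Proof.
move=> a_inj; rewrite card_imset ?card_ffun ?card_ord // => g g' /ffunP eq_gg'.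
apply/ffunP => j; apply: (a_inj j).
by have := eq_gg' (widen j); rewrite !ffunE !vrcons_widen.
Qed.

Lemma chart_grid_interpolation a (P : {mpoly F[n.+1]}) :
  (forall j, injective (a j)) -> P \is d.-homog ->
  interpolation_set d P (chart_grid a).
Proof.
move=> a_inj P_homog Q Q_homog PQ_grid x; apply/eqP; rewrite -subr_eq0 -mevalB.
suff -> : P - Q = 0 by rewrite meval0.
apply: (dhomog_grid_eq0 a_inj (rpredB P_homog Q_homog)) => g.
have /PQ_grid : finfun (vrcons (fun i => a i (g i)) 1) \in chart_grid a.
  by apply/imsetP; exists g.
by rewrite mevalB !meval_finfun => ->; rewrite subrr.
Qed.

Lemma chart_grid_disjoint a b j : (forall r r', a j r != b j r') ->
  disjoint_under_mul (chart_grid a) (chart_grid b).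
Proof.
move=> ab_j _ /imsetP[g _ ->] c _; apply/imsetP => -[g' _ /ffunP eq_pts].
have c1 : c = 1 by have := eq_pts ord_max; rewrite !ffunE !vrcons_last mulr1.
have := eq_pts (widen j); rewrite !ffunE !vrcons_widen c1 mul1r => /eqP.
by rewrite (negbTE (ab_j _ _)).
Qed.

End ChartGrids.

Theorem lemma3 (q : nat) (F : finFieldType) (hq : #|F| = q)
    (s d : nat) (hs : (2 <= s)%N) (P : {mpoly F[s]})
    (hP : P \is d.-homog) (hdeg : msize P = d.+1) :
  exists S : 'I_((q %/ d.+1) ^ s.-1) -> {set point F s},
    [/\ (forall i, #|S i| = (d.+1 ^ s.-1)%N),
        (forall i, interpolation_set d P (S i)) &
        (forall i j, i != j -> disjoint_under_mul (S i) (S j))].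
Proof.
case: s hs P hP hdeg => [|n] // _ P P_homog _ /=.
set k := (q %/ d.+1)%N.
have [blk blk_inj] : exists blk : 'I_k * 'I_d.+1 -> F, injective blk.
  apply: exists_injective_leq_card.
  by rewrite card_prod !card_ord hq leq_trunc_div.
have [code code_inj] :
    exists code : 'I_(k ^ n) -> {ffun 'I_n -> 'I_k}, injective code.
  by apply: exists_injective_leq_card; rewrite card_ffun !card_ord.
pose a i j r := blk (code i j, r).
have a_inj i j : injective (a i j) by move=> r r' /blk_inj[].
exists (fun i => chart_grid (a i)); split => [i|i|i i' ne_ii'].
- exact: card_chart_grid.
- exact: chart_grid_interpolation.
have /existsP[j ne_j] : [exists j, code i j != code i' j].
  rewrite -negb_forall; apply: contra ne_ii' => /forallP same_code.
  by apply/eqP/code_inj/ffunP => j; apply/eqP.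
apply: (@chart_grid_disjoint _ _ _ _ _ j) => r r'.
by apply: contra ne_j => /eqP/blk_inj[-> _].
Qed.
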